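(* If $Q$ is a quadrilateral in $K^2$ in standard form, then the centroid of $Q$ is the origin if and only if the vertices of $Q$ are the vertices of a parallelogram.
   Context: $K$ is a field of characteristic $\neq 2$. A quadrilateral $Q=ABA'B'$ consists of four distinct lines $A,B,A',B'$ (sides) in $K^2$, not all through one point, with adjacent sides ($A,B$; $B,A'$; $A',B'$; $B',A$) not parallel; opposite sides may be parallel. Vertices: $A\cap B$, $B\cap A'$, $A'\cap B'$, $B'\cap A$ (two may coincide if three sides are concurrent). The centroid is the average of the four vertices (equivalently the midpoint of the midpoints of the diagonals). $Q$ is in standard form if $A$ is the line $Y=0$ and $A'$ is the line $X=0$. A parallelogram is a quadrilateral whose pairs of opposite sides are parallel. *)

From HB Require Import structures.
From mathcomp Require Import all_boot all_order all_algebra.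
Set Implicit Arguments. Unset Strict Implicit. Unset Printing Implicit Defensive.
Import Order.TTheory GRing.Theory Num.Theory.
Local Open Scope ring_scope.

Section Geometry.
Variable K : fieldType.

Record line := Line { la : K; lb : K; lc : K; lnz : (la != 0) || (lb != 0) }.

Definition on_line (l : line) (p : K * K) : bool :=
  la l * p.1 + lb l * p.2 == lc l.

Definition same_line (l m : line) : Prop := forall p, on_line l p = on_line m p.

Definition parallel (l m : line) : Prop :=
  same_line l m \/ ~ (exists p, on_line l p && on_line m p).

(* intersection point of two non-parallel lines (Cramer's rule) *)
Definition meet (l m : line) : K * K :=
  let d := la l * lb m - lb l * la m in
  ((lc l * lb m - lb l * lc m) / d, (la l * lc m - lc l * la m) / d).

Definition is_quad (A B A' B' : line) : Prop :=
  ~ same_line A B /\ ~ same_line A A' /\ ~ same_line A B' /\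
  ~ same_line B A' /\ ~ same_line B B' /\ ~ same_line A' B' /\
  ~ (exists p, [&& on_line A p, on_line B p, on_line A' p & on_line B' p]) /\
  ~ parallel A B /\ ~ parallel B A' /\ ~ parallel A' B' /\ ~ parallel B' A.

Definition vertices (A B A' B' : line) : seq (K * K) :=
  [:: meet A B; meet B A'; meet A' B'; meet B' A].

Definition centroid (A B A' B' : line) : K * K :=
  let v := vertices A B A' B' in
  ((\sum_(p <- v) p.1) / 4%:R, (\sum_(p <- v) p.2) / 4%:R).

Definition standard_form (A B A' B' : line) : Prop :=
  (forall p, on_line A p = (p.2 == 0)) /\ (forall p, on_line A' p = (p.1 == 0)).

Definition is_parallelogram (P1 P2 P3 P4 : line) : Prop :=
  [/\ is_quad P1 P2 P3 P4, parallel P1 P3 & parallel P2 P4].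

End Geometry.

From HB Require Import structures.
From mathcomp Require Import all_boot all_order all_algebra ring.
From Stdlib Require Import Classical.
Set Implicit Arguments. Unset Strict Implicit. Unset Printing Implicit Defensive.
Import Order.TTheory GRing.Theory Num.Theory.
Local Open Scope ring_scope.

(* In standard form the vertices are (u, 0), (0, v), (0, v'), (u', 0), so the centroid is the
   origin iff u' = -u and v' = -v.  The opposite vertices of a parallelogram have the same
   midpoint, and four distinct points on the axes can only be split into two pairs with the same
   midpoint by pairing the two points of each axis, which forces this symmetry.  Conversely, for
   u, v <> 0 the rhombus with vertices (+-u, 0), (0, +-v) is a parallelogram with these vertices. *)

Section PlaneGeometry.
Variable K : fieldType.
Implicit Types (l m : line K) (p q w : K * K).

Definition ldet l m := la l * lb m - lb l * la m.

Definition ldot l p := la l * p.1 + lb l * p.2.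

Lemma ldetC l m : ldet m l = - ldet l m.
Proof. by rewrite /ldet; ring. Qed.

Lemma ldotB l p q : ldot l (p - q) = ldot l p - ldot l q.
Proof. by rewrite /ldot /=; ring. Qed.

Lemma on_lineE l p : on_line l p = (ldot l p == lc l).
Proof. by []. Qed.

Lemma on_line_ldotB l p q : on_line l p -> on_line l q -> ldot l (p - q) = 0.
Proof. by rewrite !on_lineE ldotB => /eqP -> /eqP ->; rewrite subrr. Qed.

Lemma on_line_meet l m :
  ldet l m != 0 -> on_line l (meet l m) /\ on_line m (meet l m).
Proof. by rewrite /ldet /on_line /meet /= => d0; split; apply/eqP; field. Qed.

Lemma meet_eq l m p : ldet l m != 0 -> on_line l p -> on_line m p -> meet l m = p.
Proof.
rewrite /ldet /meet; case: p => x y d0 /eqP <- /eqP <- /=.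
by congr pair; field.
Qed.

Lemma ldet_neq0_ldot_eq0 l m w :
  ldet l m != 0 -> ldot l w = 0 -> ldot m w = 0 -> w = 0.
Proof.
case: w => x y; rewrite /ldot /= => d0 lw mw; congr pair; apply: (mulIf d0).
- transitivity (lb m * (la l * x + lb l * y) - lb l * (la m * x + lb m * y)).
    by rewrite /ldet; ring.
  by rewrite lw mw !mulr0 subrr mul0r.
- transitivity (la l * (la m * x + lb m * y) - la m * (la l * x + lb l * y)).
    by rewrite /ldet; ring.
  by rewrite lw mw !mulr0 subrr mul0r.
Qed.

Lemma ldet_eq0_ldot_eq0 l m w : ldet l m = 0 -> ldot m w = 0 -> ldot l w = 0.
Proof.
case: w => x y; rewrite /ldet /ldot /= => d0 mw; have /orP[am0 | bm0] := lnz m.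
- apply: (mulfI am0); rewrite mulr0.
  transitivity (la l * (la m * x + lb m * y) - y * (la l * lb m - lb l * la m)).
    by ring.
  by rewrite mw d0 !mulr0 subrr.
- apply: (mulfI bm0); rewrite mulr0.
  transitivity (lb l * (la m * x + lb m * y) + x * (la l * lb m - lb l * la m)).
    by ring.
  by rewrite mw d0 !mulr0 addr0.
Qed.

Lemma on_line_ldet_eq0 l m p q :
  ldet l m = 0 -> on_line l p -> on_line m p -> on_line m q -> on_line l q.
Proof.
move=> d0 lp mp mq; have := ldet_eq0_ldot_eq0 d0 (on_line_ldotB mq mp).
by rewrite ldotB => /eqP; rewrite subr_eq0 => /eqP lq; rewrite on_lineE lq.
Qed.

Lemma same_line_ldet_eq0 l m p :
  ldet l m = 0 -> on_line l p -> on_line m p -> same_line l m.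
Proof.
move=> d0 lp mp q; apply/idP/idP; last exact: on_line_ldet_eq0 lp mp.
by apply: on_line_ldet_eq0 mp lp; rewrite ldetC d0 oppr0.
Qed.

Lemma parallel_ldet l m : parallel l m <-> ldet l m = 0.
Proof.
split=> [par | d0]; last first.
  case: (classic (exists p, on_line l p && on_line m p)) => [[p /andP[lp mp]] | disj].
    by left; exact: same_line_ldet_eq0 lp mp.
  by right.
case: (eqVneq (ldet l m) 0) => // d0; exfalso.
have [] := on_line_meet d0; rewrite !on_lineE => /eqP lM /eqP mM.
case: par => [same | []]; last by exists (meet l m); rewrite !on_lineE lM mM !eqxx.
(* shifting the meet along the direction [d] of [l] leaves [l] but not [m] *)
pose d := (lb l, - la l).
have md : ldot m d = - ldet l m by rewrite /ldot /ldet /=; ring.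
have : on_line l (meet l m - d) by rewrite on_lineE ldotB lM /ldot /=; apply/eqP; ring.
rewrite same on_lineE ldotB mM -subr_eq0 addrAC subrr add0r oppr_eq0 md oppr_eq0.
by rewrite (negbTE d0).
Qed.

Lemma nparallel_ldet l m : ~ parallel l m -> ldet l m != 0.
Proof. by move=> npar; apply/eqP => /parallel_ldet. Qed.

Lemma ldet_nparallel l m : ldet l m != 0 -> ~ parallel l m.
Proof. by move=> d0 /parallel_ldet /eqP; rewrite (negbTE d0). Qed.

Lemma ldet_nsame_line l m : ldet l m != 0 -> ~ same_line l m.
Proof. by move=> /ldet_nparallel npar same; apply: npar; left. Qed.

Lemma parallel_neq l m p q :
  ~ same_line l m -> parallel l m -> on_line l p -> on_line m q -> p != q.
Proof.
move=> nsame [// | disj] lp mq; apply/eqP => epq; apply: disj.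
by exists p; rewrite lp epq mq.
Qed.

Lemma lc_neq_disjoint l m :
  la l = la m -> lb l = lb m -> lc l != lc m -> ~ (exists p, on_line l p && on_line m p).
Proof.
move=> ea eb + [p /andP[/eqP lp /eqP mp]].
by rewrite -lp -mp /ldot ea eb eqxx.
Qed.

Lemma is_parallelogram_intro P1 P2 P3 P4 :
  ldet P1 P2 != 0 -> ldet P2 P3 != 0 -> ldet P3 P4 != 0 -> ldet P4 P1 != 0 ->
  ~ (exists p, on_line P1 p && on_line P3 p) ->
  ~ (exists p, on_line P2 p && on_line P4 p) ->
  is_parallelogram P1 P2 P3 P4.
Proof.
move=> d12 d23 d34 d41 disj13 disj24.
have [on1 on2] := on_line_meet d12.
have nsame_disj l m p : on_line l p ->
    ~ (exists p, on_line l p && on_line m p) -> ~ same_line l m.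
  by move=> lp disj same; apply: disj; exists p; rewrite -same lp.
split; [|by right|by right].
split; first exact: ldet_nsame_line.
split; first exact: nsame_disj on1 disj13.
split; first by apply: ldet_nsame_line; rewrite ldetC oppr_eq0.
split; first exact: ldet_nsame_line.
split; first exact: nsame_disj on2 disj24.
split; first exact: ldet_nsame_line.
split; first by case=> p /and4P[p1 _ p3 _]; apply: disj13; exists p; rewrite p1 p3.
by split; [|split; [|split]]; apply: ldet_nparallel.
Qed.

Section Parallelogram.
Variables P1 P2 P3 P4 : line K.
Hypothesis gramP : is_parallelogram P1 P2 P3 P4.

Lemma parallelogram_uniq_vertices : uniq (vertices P1 P2 P3 P4).
Proof.
case: gramP => [[_ [n13 [_ [_ [n24 [_ [_ [n12 [n23 [n34 n41]]]]]]]]]] p13 p24].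
have [V1_1 V1_2] := on_line_meet (nparallel_ldet n12).
have [V2_2 V2_3] := on_line_meet (nparallel_ldet n23).
have [V3_3 V3_4] := on_line_meet (nparallel_ldet n34).
have [V4_4 V4_1] := on_line_meet (nparallel_ldet n41).
have n31 : ~ same_line P3 P1 by move=> same; apply: n13 => p; rewrite same.
have p31 : parallel P3 P1.
  by apply/parallel_ldet; rewrite ldetC (parallel_ldet _ _).1 ?oppr0.
rewrite /= !inE !negb_or !andbT.
rewrite (parallel_neq n13 p13 V1_1 V2_3) (parallel_neq n13 p13 V1_1 V3_3).
rewrite (parallel_neq n24 p24 V1_2 V4_4) (parallel_neq n24 p24 V2_2 V3_4).
by rewrite (parallel_neq n31 p31 V2_3 V4_1) (parallel_neq n31 p31 V3_3 V4_1).
Qed.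

Lemma parallelogram_vertex_sum :
  meet P1 P2 + meet P3 P4 = meet P2 P3 + meet P4 P1.
Proof.
case: gramP => [[_ [_ [_ [_ [_ [_ [_ [n12 [n23 [n34 n41]]]]]]]]]] p13 p24].
have [V1_1 V1_2] := on_line_meet (nparallel_ldet n12).
have [V2_2 V2_3] := on_line_meet (nparallel_ldet n23).
have [V3_3 V3_4] := on_line_meet (nparallel_ldet n34).
have [V4_4 V4_1] := on_line_meet (nparallel_ldet n41).
set V1 := meet P1 P2 in V1_1 V1_2 *; set V2 := meet P2 P3 in V2_2 V2_3 *.
set V3 := meet P3 P4 in V3_3 V3_4 *; set V4 := meet P4 P1 in V4_4 V4_1 *.
apply/eqP; rewrite -subr_eq0; apply/eqP.
(* [V1 + V3 - (V2 + V4)] is orthogonal to the normals of both pairs of opposite sides *)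
apply: (ldet_neq0_ldot_eq0 (nparallel_ldet n12)).
- have -> : V1 + V3 - (V2 + V4) = (V1 - V4) - (V2 - V3) by ring.
  rewrite ldotB (on_line_ldotB V1_1 V4_1).
  by rewrite (ldet_eq0_ldot_eq0 ((parallel_ldet _ _).1 p13) (on_line_ldotB V2_3 V3_3)) subrr.
- have -> : V1 + V3 - (V2 + V4) = (V1 - V2) - (V4 - V3) by ring.
  rewrite ldotB (on_line_ldotB V1_2 V2_2).
  by rewrite (ldet_eq0_ldot_eq0 ((parallel_ldet _ _).1 p24) (on_line_ldotB V4_4 V3_4)) subrr.
Qed.

End Parallelogram.

(* Brute force over the 4^4 placements: [p + r = q + s] forces the diagonals [{p, r}] and
   [{q, s}] to be the two pairs of points on the same axis. *)
Lemma axes_parallelogram_opp (u v v' u' : K) (p q r s : K * K) :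
  uniq [:: p; q; r; s] -> p + r = q + s ->
  {subset [:: p; q; r; s] <= [:: (u, 0); (0, v); (0, v'); (u', 0)]} ->
  u + u' = 0 /\ v + v' = 0.
Proof.
move=> + [E1 E2] onS; move: (onS p) (onS q) (onS r) (onS s) E1 E2.
rewrite !inE !eqxx ?orbT /=.
do 4!move=> /(_ isT) /or4P[] /eqP->.
all: rewrite /= !inE => E1 E2; rewrite !xpair_eqE !eqxx /= ?orbT ?andbF //= => U.
all: rewrite ?add0r ?addr0 in E1 E2.
all: try by move: U; rewrite E1 eqxx /= ?orbT ?andbF.
all: try by move: U; rewrite E2 eqxx /= ?orbT ?andbF.
all: split; [move: E1 | move: E2].
all: first [by [] | by move<- | by rewrite addrC | by rewrite addrC => <-].
Qed.

Lemma standard_form_vertices (A B A' B' : line K) :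
  is_quad A B A' B' -> standard_form A B A' B' ->
  exists u v v' u', [/\ vertices A B A' B' = [:: (u, 0); (0, v); (0, v'); (u', 0)],
    ~ (u = 0 /\ u' = 0) & ~ (v = 0 /\ v' = 0)].
Proof.
case=> _ [_ [_ [_ [_ [_ [nconc [nAB [nBA' [nA'B' nB'A]]]]]]]]] [onA onA'].
have [AB_A AB_B] := on_line_meet (nparallel_ldet nAB).
have [BA'_B BA'_A'] := on_line_meet (nparallel_ldet nBA').
have [A'B'_A' A'B'_B'] := on_line_meet (nparallel_ldet nA'B').
have [B'A_B' B'A_A] := on_line_meet (nparallel_ldet nB'A).
have onX p : on_line A p -> p = (p.1, 0) by rewrite onA; case: p => x y /= /eqP->.
have onY p : on_line A' p -> p = (0, p.2) by rewrite onA'; case: p => x y /= /eqP->.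
exists (meet A B).1, (meet B A').2, (meet A' B').2, (meet B' A).1; split.
- by rewrite /vertices -onX // -onY // -onY // -onX.
- move=> [u0 u'0]; apply: nconc; exists (0, 0).
  have eAB : meet A B = (0, 0) by rewrite (onX _ AB_A) u0.
  have eB'A : meet B' A = (0, 0) by rewrite (onX _ B'A_A) u'0.
  by rewrite onA onA' /= eqxx -{1}eAB AB_B -eB'A B'A_B'.
- move=> [v0 v'0]; apply: nconc; exists (0, 0).
  have eBA' : meet B A' = (0, 0) by rewrite (onY _ BA'_A') v0.
  have eA'B' : meet A' B' = (0, 0) by rewrite (onY _ A'B'_A') v'0.
  by rewrite onA onA' /= eqxx -{1}eBA' BA'_B -eA'B' A'B'_B'.
Qed.

Lemma centroid_eq0_axes (A B A' B' : line K) u v v' u' : (2%:R : K) != 0 ->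
  vertices A B A' B' = [:: (u, 0); (0, v); (0, v'); (u', 0)] ->
  centroid A B A' B' = (0, 0) <-> u + u' = 0 /\ v + v' = 0.
Proof.
move=> two0 eV; rewrite /centroid eV !big_cons !big_nil /= !(add0r, addr0).
have four0 : (4%:R : K) != 0 by rewrite (_ : 4 = 2 * 2)%N // natrM mulf_neq0.
split=> [[/eqP + /eqP] | [-> ->]]; last by rewrite !mul0r.
by rewrite !mulf_eq0 !invr_eq0 (negbTE four0) !orbF => /eqP-> /eqP->.
Qed.

Section Rhombus.
Variables u v : K.
Hypotheses (two0 : (2%:R : K) != 0) (u0 : u != 0) (v0 : v != 0).

Definition rhombus_side (b c : K) : line K := @Line K v b c (introT orP (or_introl v0)).

Let P1 := rhombus_side (- u) (u * v).
Let P2 := rhombus_side u (u * v).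
Let P3 := rhombus_side (- u) (- (u * v)).
Let P4 := rhombus_side u (- (u * v)).

Lemma ldet_rhombus_side b c b' c' :
  ldet (rhombus_side b c) (rhombus_side b' c') = v * (b' - b).
Proof. by rewrite /ldet /=; ring. Qed.

Let uu0 : u + u != 0.
Proof. by rewrite -mulr2n -mulr_natr mulf_neq0. Qed.

Let nuu0 : - u - u != 0.
Proof. by rewrite -opprD oppr_eq0. Qed.

Lemma rhombus_vertices : vertices P1 P2 P3 P4 = [:: (u, 0); (0, v); (- u, 0); (0, - v)].
Proof.
rewrite /vertices; congr [:: _; _; _; _]; apply: meet_eq;
  rewrite ?ldet_rhombus_side ?opprK ?mulf_neq0 // on_lineE /ldot /=; apply/eqP; ring.
Qed.

Lemma rhombus_parallelogram : is_parallelogram P1 P2 P3 P4.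
Proof.
have uv0 : u * v != - (u * v) by rewrite -addr_eq0 -mulr2n -mulr_natr !mulf_neq0.
apply: is_parallelogram_intro; rewrite ?ldet_rhombus_side ?opprK ?mulf_neq0 //.
- by apply: lc_neq_disjoint.
- by apply: lc_neq_disjoint.
Qed.

End Rhombus.
End PlaneGeometry.

Theorem corollary4p5 (K : fieldType) (hK : (2%:R : K) != 0)
    (A B A' B' : line K) :
  is_quad A B A' B' -> standard_form A B A' B' ->
  (centroid A B A' B' = (0, 0) <->
   exists P1 P2 P3 P4 : line K,
     is_parallelogram P1 P2 P3 P4 /\
     vertices A B A' B' =i vertices P1 P2 P3 P4).
Proof.
move=> quadQ stdQ.
have [u [v [v' [u' [eV nu nv]]]]] := standard_form_vertices quadQ stdQ.
rewrite (centroid_eq0_axes hK eV) eV.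
split=> [[uu' vv'] | [P1 [P2 [P3 [P4 [gramP eP]]]]]]; last first.
  apply: (axes_parallelogram_opp (parallelogram_uniq_vertices gramP)).
    exact: parallelogram_vertex_sum gramP.
  by move=> x; rewrite -eP.
have eu' : u' = - u by apply/eqP; rewrite -addr_eq0 addrC uu'.
have ev' : v' = - v by apply/eqP; rewrite -addr_eq0 addrC vv'.
have u0 : u != 0 by apply/eqP => u0; apply: nu; rewrite eu' u0 oppr0.
have v0 : v != 0 by apply/eqP => v0; apply: nv; rewrite ev' v0 oppr0.
exists (rhombus_side v0 (- u) (u * v)), (rhombus_side v0 u (u * v)),
  (rhombus_side v0 (- u) (- (u * v))), (rhombus_side v0 u (- (u * v))).
split; first exact: rhombus_parallelogram.
by rewrite rhombus_vertices // eu' ev' => x; rewrite !inE [X in _ || (_ || X)]orbC.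
Qed.
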